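(* Let $r>0$, $0<p<1$ and $q=1-p$. Let $N$ be a negative binomial random variable with $P(N=n)=\binom{r+n-1}{n}p^r q^n$, $n=0,1,2,\dots$, and conditionally on $N=n$ let $X$ be uniformly distributed on $\{0,1,\dots,n\}$, i.e. $P(X=x\mid N=n)=\frac{1}{n+1}$ for $x\in\{0,\dots,n\}$. Then for every $x=0,1,2,\dots$, $$P(X=x)=\frac{q^{x}p^{r}}{1+x}\binom{r+x-1}{x}\,{}_2F_1(1,r+x;2+x;q).$$
   Context: For real $r>0$, $\binom{r+n-1}{n}=\frac{\Gamma(r+n)}{n!\,\Gamma(r)}$. The Gauss hypergeometric function is ${}_2F_1(a,b;c;z)=\sum_{n=0}^\infty \frac{(a)_n(b)_n}{(c)_n}\frac{z^n}{n!}$ for $|z|<1$, where $(s)_0=1$ and $(s)_n=s(s+1)\cdots(s+n-1)$ for $n\ge1$. The distribution of $X$ is called the Uniform-negative binomial distribution $\mathcal{UNB}(r,p)$. *)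

From mathcomp Require Import all_boot all_order all_algebra.
From mathcomp Require Import all_classical all_reals all_analysis.
Set Implicit Arguments. Unset Strict Implicit. Unset Printing Implicit Defensive.
Import Order.TTheory GRing.Theory Num.Theory.
Import numFieldNormedType.Exports.
Local Open Scope ring_scope.

Definition poch {R : realType} (s : R) (n : nat) : R :=
  \prod_(i < n) (s + i%:R).

(* Generalized binomial coefficient binom(r+n-1, n) = Gamma(r+n)/(n! Gamma(r))
   = (r)_n / n!  (for r > 0). *)
Definition gbinom {R : realType} (r : R) (n : nat) : R :=
  poch r n / (n`!)%:R.

Definition hyp2F1_term {R : realType} (a b c z : R) (n : nat) : R :=
  poch a n * poch b n / poch c n * z ^+ n / (n`!)%:R.

Definition hyp2F1 {R : realType} (a b c z : R) : R :=
  limn (series (hyp2F1_term a b c z)).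

Definition negbin_pmf {R : realType} (r p : R) (n : nat) : R :=
  gbinom r n * powR p r * (1 - p) ^+ n.

From mathcomp Require Import all_boot all_order all_algebra.
From mathcomp Require Import all_classical all_reals all_analysis.
From mathcomp Require Import ring.
Import Order.TTheory GRing.Theory Num.Theory.
Import numFieldNormedType.Exports.
Local Open Scope classical_set_scope.
Local Open Scope ring_scope.

(* By countable additivity P(X = x) = sum_n P(X = x, N = n), and only n >= x
   contributes.  Writing n = x + k, the term P(X = x, N = x + k) =
   (r)_(x+k) p^r q^(x+k) / (x+k+1)! factors, via (r)_(x+k) = (r)_x (r+x)_k and
   (x+k+1)! = (x+1)! (x+2)_k, as the prefactor of the theorem times the k-th
   term of 2F1(1, r+x; 2+x; q), whose (1)_k cancels the k! of the series. *)

Section Pochhammer.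
Variable R : realType.
Implicit Types (s : R) (m k : nat).

Lemma pochD s m k : poch s (m + k) = poch s m * poch (s + m%:R) k.
Proof.
rewrite /poch big_split_ord /=; congr (_ * _).
by apply: eq_bigr => i _; rewrite natrD addrA.
Qed.

Lemma poch1 k : poch (1 : R) k = k`!%:R.
Proof.
elim: k => [|k IHk]; first by rewrite /poch big_ord0.
by rewrite /poch big_ord_recr /= -/(poch 1 k) IHk factS natrM mulrC addrC -natr1.
Qed.

Lemma poch_gt0 s k : 0 < s -> 0 < poch s k.
Proof. by move=> s_gt0; apply: prodr_gt0 => i _; rewrite ltr_wpDr. Qed.

Lemma poch_natS_fact m k : poch (m.+1%:R) k * m`!%:R = (m + k)`!%:R :> R.
Proof. by rewrite -!poch1 pochD mulrC addrC natr1. Qed.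

Lemma gbinom_gt0 (r : R) k : 0 < r -> 0 < gbinom r k.
Proof. by move=> r_gt0; rewrite divr_gt0 ?poch_gt0 // ltr0n fact_gt0. Qed.

Lemma hyp2F1_term1 (b c z : R) k :
  hyp2F1_term 1 b c z k = poch b k / poch c k * z ^+ k.
Proof.
have k_fact_neq0 : k`!%:R != 0 :> R by rewrite pnatr_eq0 -lt0n fact_gt0.
rewrite /hyp2F1_term poch1 mulrAC; congr (_ * _).
by rewrite mulrAC [_ * poch b k]mulrC mulfK.
Qed.

End Pochhammer.

Lemma negbin_uniform_term {R : realType} (r p : R) (x k : nat) :
  ((k + x).+1%:R)^-1 * negbin_pmf r p (k + x) =
  (1 - p) ^+ x * powR p r / (1 + x%:R) * gbinom r x
  * hyp2F1_term 1 (r + x%:R) (2 + x%:R) (1 - p) k.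
Proof.
have natrS n : n.+1%:R = 1 + n%:R :> R by rewrite -natr1 addrC.
have two_addx : 2 + x%:R = x.+2%:R :> R by rewrite -[x.+2]addn2 natrD addrC.
have fact_neq0 n : n`!%:R != 0 :> R by rewrite pnatr_eq0 -lt0n fact_gt0.
have poch_neq0 : poch (x.+2%:R) k != 0 :> R by rewrite gt_eqF ?poch_gt0.
have fact_split : (x + k)`!%:R = poch (x.+2%:R) k * ((1 + x%:R) * x`!%:R)
                                 / (x + k).+1%:R :> R.
  rewrite -natrS -natrM -factS poch_natS_fact addSn factS natrM.
  by rewrite mulrC mulKf ?pnatr_eq0.
rewrite /negbin_pmf /gbinom hyp2F1_term1 two_addx addnC pochD exprD fact_split.
by field; rewrite poch_neq0 fact_neq0 -natrD -!natrS !pnatr_eq0.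
Qed.

Lemma measure_fibers_cvg {d} {T : measurableType d} {R : realType}
    (mu : {measure set T -> \bar R}) (A : set T) (N : T -> nat) :
  measurable A -> (forall n, measurable (N @^-1` [set n])) ->
  (fun n => \sum_(0 <= i < n) mu (A `&` N @^-1` [set i]))%E @ \oo --> mu A.
Proof.
move=> mA mN; have mAN n : measurable (A `&` N @^-1` [set n]) by exact: measurableI.
have AN_trivI : trivIset setT (fun n => A `&` N @^-1` [set n]).
  by move=> i j _ _ [t [[_ <-] [_ <-]]].
have cover_A : \bigcup_n (A `&` N @^-1` [set n]) = A.
  by apply/seteqP; split => [t [n _ []] | t At] //; exists (N t).
by have := @measure_sigma_additive _ _ _ mu _ mAN AN_trivI; rewrite cover_A.
Qed.

Lemma finite_measure_fibers_series {d} {T : measurableType d} {R : realType}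
    (mu : {finite_measure set T -> \bar R}) {A : set T} {N : T -> nat}
    {a : R ^nat} :
  measurable A -> (forall n, measurable (N @^-1` [set n])) ->
  (forall n, mu (A `&` N @^-1` [set n]) = (a n)%:E) ->
  series a @ \oo --> fine (mu A).
Proof.
move=> mA mN mu_a.
have : (fun n => (series a n)%:E) @ \oo --> (fine (mu A))%:E.
  rewrite fineK ?fin_num_measure //.
  under eq_fun do rewrite /series /= -sumEFin.
  under eq_fun do under eq_bigr do rewrite -mu_a.
  exact: measure_fibers_cvg.
by move/fine_cvgP => [].
Qed.

Lemma cvg_series_shift {R : numFieldType} {a h : R ^nat} {c l : R} (x : nat) :
  c != 0 -> (forall n, (n < x)%N -> a n = 0) -> (forall k, a (k + x)%N = c * h k) ->
  series a @ \oo --> l -> series h @ \oo --> l / c.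
Proof.
move=> c_neq0 a_lt0 a_shift; rewrite -(cvg_shiftn x) => a_cvg.
have series_shift k : series a (k + x)%N = c * series h k.
  rewrite /series /= (big_cat_nat _ (leq_addl k x)) //= big_nat.
  rewrite big1 ?add0r; last by move=> i /andP[_ /a_lt0].
  by rewrite -{1}(add0n x) big_addn addnK mulr_sumr; apply: eq_bigr => i _.
have -> : series h = (fun k => series a (k + x)%N * c^-1).
  by apply: funext => k; rewrite series_shift mulrC mulKf.
exact: cvgM a_cvg (cvg_cst _).
Qed.
Theorem theorem1 (R : realType) (d : measure_display) (T : measurableType d)
  (P : probability T R) (N X : T -> nat) (r p : R)
  (hr : 0 < r) (hp0 : 0 < p) (hp1 : p < 1)
  (mN : forall n : nat, measurable (N @^-1` [set n]))
  (mX : forall x : nat, measurable (X @^-1` [set x]))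
  (hN : forall n : nat, P (N @^-1` [set n]) = (negbin_pmf r p n)%:E)
  (hXN : forall n x : nat,
      P (X @^-1` [set x] `&` N @^-1` [set n]) =
      ((if (x <= n)%N then (n.+1%:R)^-1 else 0) * negbin_pmf r p n)%:E) :
  forall x : nat,
    P (X @^-1` [set x]) =
    ((1 - p) ^+ x * powR p r / (1 + x%:R) * gbinom r x
       * hyp2F1 1 (r + x%:R) (2 + x%:R) (1 - p))%:E.
Proof.
move=> x.
set C := (1 - p) ^+ x * powR p r / (1 + x%:R) * gbinom r x.
have C_gt0 : 0 < C.
  rewrite mulr_gt0 ?gbinom_gt0 // divr_gt0 ?ltr_wpDr // mulr_gt0 ?powR_gt0 //.
  by rewrite exprn_gt0 // subr_gt0.
have hyp2F1_cvg : series (hyp2F1_term 1 (r + x%:R) (2 + x%:R) (1 - p)) @ \oo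
                  --> fine (P (X @^-1` [set x])) / C.
  apply: (cvg_series_shift x (lt0r_neq0 C_gt0) _ _
            (finite_measure_fibers_series P (mX x) mN (hXN^~ x))).
  - by move=> n n_lt_x; rewrite leqNgt n_lt_x mul0r.
  - by move=> k; rewrite leq_addl negbin_uniform_term.
rewrite /hyp2F1 (cvg_lim _ hyp2F1_cvg) // mulrC divfK ?lt0r_neq0 //.
by rewrite fineK ?fin_num_measure.
Qed.
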